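(* Let $k$ be a non-archimedean local field of residue characteristic $2$. Let $B(x)=\Delta x^2$ on $k$, where $|\Delta|=|\varpi|$. Let $z=q^{-\beta}$, $w=zq^{-1}$, and $t\in\mathfrak o\setminus\{0\}$ with $|t|=q^{-T}$. If $|2|\ge|t^2|$, then \[ X^B(\beta;t^2)=|\varpi|^{\lfloor e/2\rfloor}\,\frac{1-(zw)^{T+1-\lceil e/2\rceil}}{1-zw} + z\,|\varpi|^{\lceil e/2\rceil}\,\frac{1-(zw)^{T-\lfloor e/2\rfloor}}{1-zw}, \] and $X^B(\beta;t^2)=0$ otherwise.
   Context: $k$ has ring of integers $\mathfrak o$, uniformizer $\varpi$, residue field of cardinality $q$, absolute value normalized by $|\varpi|=q^{-1}$, and $e=\operatorname{ord}(2)$ is the ramification index. On $\mathfrak o^n$ use the additive Haar measure of total mass $1$. For a quadratic form $B$ on $k^n$, $\rho\in\mathfrak o$ and integer $\ell\ge0$: $X_\ell^B(\rho)=\operatorname{meas}\{x\in\mathfrak o^n: B(x)-\rho\in 2\varpi^\ell\mathfrak o\}$ and $X^B(\beta;\rho)=\sum_{\ell\ge0}z^\ell X_\ell^B(\rho)$ with $z=q^{-\beta}$. *)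

From mathcomp Require Import all_boot all_algebra.
From Stdlib Require Import Reals ZArith ClassicalEpsilon.
From Coquelicot Require Import Coquelicot.

Set Implicit Arguments.
Unset Strict Implicit.
Unset Printing Implicit Defensive.

Section NonArchLocalField.

Variables (k : fieldType) (ord : k -> Z) (unif : k) (reps : seq k).

Local Open Scope ring_scope.

Definition in_o (x : k) : Prop := x = 0 \/ (0 <= ord x)%Z.

Definition in_ideal (c x : k) : Prop := exists y, in_o y /\ x = c * y.

Definition val_cauchy (s : nat -> k) : Prop :=
  forall m : nat, exists N : nat, forall a b : nat, leq N a -> leq N b ->
    in_ideal (unif ^+ m) (s a - s b).

Definition val_converges (s : nat -> k) (L : k) : Prop :=
  forall m : nat, exists N : nat, forall a : nat, leq N a ->
    in_ideal (unif ^+ m) (s a - L).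

(* k is a non-archimedean local field: a field complete for a discrete
   valuation ord (normalised, ord unif = 1) with finite residue field, of which
   reps is a complete set of representatives (so q = size reps). *)
Record is_nonarch_local_field : Prop := {
  ord_mul : forall x y : k, x != 0 -> y != 0 -> ord (x * y) = (ord x + ord y)%Z;
  ord_add : forall x y : k, x != 0 -> y != 0 -> x + y != 0 ->
              (Z.min (ord x) (ord y) <= ord (x + y))%Z;
  unif_neq0 : unif != 0;
  ord_unif : ord unif = 1%Z;
  reps_in_o : forall i : nat, ltn i (size reps) -> in_o (nth 0 reps i);
  reps_distinct : forall i j : nat, ltn i (size reps) -> ltn j (size reps) ->
              in_ideal unif (nth 0 reps i - nth 0 reps j) -> i = j;
  reps_cover : forall x : k, in_o x ->
              exists i : nat, ltn i (size reps) /\ in_ideal unif (x - nth 0 reps i);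
  complete : forall s : nat -> k, val_cauchy s -> exists L : k, val_converges s L
}.

(* residue characteristic 2 (2 lies in the maximal ideal), with 2 <> 0 so that
   e = ord 2 is finite *)
Definition residue_char_two : Prop := (2%:R : k) != 0 /\ in_ideal unif 2%:R.

Definition ram_index : nat := Z.to_nat (ord 2%:R).

(* the i-th digit expansion  sum_{i<N} reps[f i] unif^i : a complete system
   of representatives of o / unif^N o *)
Definition digit_elem (N : nat) (f : {ffun 'I_N -> 'I_(size reps)}) : k :=
  \sum_(i < N) nth 0 reps (f i) * unif ^+ i.

Definition decide (P : Prop) : bool :=
  if excluded_middle_informative P then true else false.

(* number of residue classes a + unif^N o (a in o) entirely contained in S *)
Definition inner_count (S : k -> Prop) (N : nat) : nat :=
  #|[set f : {ffun 'I_N -> 'I_(size reps)} |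
      decide (forall y : k, in_o y -> S (digit_elem f + unif ^+ N * y))]|.

End NonArchLocalField.

Section Measure.
Variables (k : fieldType) (ord : k -> Z) (unif : k) (reps : seq k).
Local Open Scope R_scope.

Definition resq : R := INR (size reps).

Definition absv (x : k) : R :=
  if x == (GRing.zero : k) then 0 else powerRZ resq (- ord x)%Z.

(* Haar measure (total mass 1 on o) of an OPEN subset S of o, computed as
   lim_N q^(-N) * #{ classes mod unif^N contained in S }
   (inner regularity: for open S this is the Haar measure). *)
Definition haar_open (S : k -> Prop) : R :=
  real (Lim_seq (fun N => INR (inner_count ord unif reps S N) / resq ^ N)).

End Measure.

Section Xell.
Variables (k : fieldType) (ord : k -> Z) (unif : k) (reps : seq k).
Local Open Scope ring_scope.
Definition X_ell (B : k -> k) (rho : k) (l : nat) : R :=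
  haar_open ord unif reps (fun x => in_o ord x /\
     in_ideal ord (2%:R * unif ^+ l) (B x - rho)).

Definition sq_form (Delta : k) : k -> k := fun x => Delta * x ^+ 2.

End Xell.

(* q^(-beta) = exp(-beta ln q) for complex beta *)
Definition qpowC (q : R) (beta : C) : C :=
  (Rpower q (- fst beta) * cos (snd beta * ln q),
   - (Rpower q (- fst beta) * sin (snd beta * ln q)))%R.

From mathcomp Require Import all_boot all_algebra.
From Stdlib Require Import Reals ZArith Lia Lra.
From Stdlib Require Import ClassicalEpsilon FunctionalExtensionality PropExtensionality.
From Coquelicot Require Import Coquelicot.
From mathcomp Require Import zify.

Set Implicit Arguments.
Unset Strict Implicit.
Unset Printing Implicit Defensive.
Import GRing.Theory.

(* The valuation of [Delta x^2] is odd and that of [t^2] is even, so they never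
   cancel: ord (Delta x^2 - t^2) = min (2 ord x + 1) (2 T).  Hence the set of [x]
   in [o] with [Delta x^2 - t^2] in [2 unif^l o] is empty when [e + l > 2 T], and
   is otherwise the ball [unif^m o], [m = floor ((e + l) / 2)], of measure [q^-m].
   The series is therefore a finite sum, which splits according to the parity of
   [l] into two geometric sums of ratio [z w]. *)

Lemma card_family_prefix (N m p : nat) (g : 'I_N -> 'I_p) : (m <= N)%nat ->
  #|(finfun.family (fun i : 'I_N => if (i < m)%nat then pred1 (g i) else predT)
      : simpl_pred {ffun 'I_N -> 'I_p})| = expn p (N - m).
Proof.
move=> mN; rewrite card_family.
set F := fun i : 'I_N => _.
have -> : foldr muln 1%nat [seq F i | i : 'I_N] = \prod_(i < N) F i.
  by rewrite -big_enum /= unlock /reducebig /image_mem foldr_map.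
rewrite (eq_bigr (fun i : 'I_N => if (i < m)%nat then 1%nat else p)); last first.
  by move=> i _; rewrite /F; case: ifP => _; rewrite ?card1 // cardT size_enum_ord.
rewrite -(big_mkord xpredT (fun i => if (i < m)%nat then 1%nat else p)).
rewrite (big_cat_nat (leq0n m) mN) /= big_nat_cond big1 ?mul1n; last first.
  by move=> i /andP [/andP [_ ->]].
rewrite big_nat_cond (eq_bigr (fun _ => p)) -?big_nat_cond ?prod_nat_const_nat //.
by move=> i /andP [/andP [hi _] _]; rewrite ltnNge hi.
Qed.

Section Valuation.
Variables (k : fieldType) (ord : k -> Z) (unif : k) (reps : seq k).
Hypothesis Hk : is_nonarch_local_field ord unif reps.
Local Open Scope ring_scope.

(* [x] lies in [unif^n o]; the value [ord 0] is unspecified. *)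
Definition vge (x : k) (n : Z) : Prop := x = 0 \/ (n <= ord x)%Z.

Lemma ord1 : ord 1 = 0%Z.
Proof.
have h : ord (1 * 1 : k) = (ord (1 : k) + ord (1 : k))%Z :=
  ord_mul Hk (oner_neq0 k) (oner_neq0 k).
by rewrite mulr1 in h; lia.
Qed.

Lemma ordN x : ord (- x) = ord x.
Proof.
have N1 : (-1 : k) != 0 by rewrite oppr_eq0 oner_neq0.
have ordN1 : ord (-1) = 0%Z by have := ord_mul Hk N1 N1; rewrite mulrNN mulr1 ord1; lia.
have [->|x0] := eqVneq x 0; first by rewrite oppr0.
by rewrite -mulN1r (ord_mul Hk N1 x0) ordN1.
Qed.

Lemma ordV x : x != 0 -> ord x^-1 = (- ord x)%Z.
Proof. by move=> x0; have := ord_mul Hk x0 (invr_neq0 x0); rewrite mulfV // ord1; lia. Qed.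

Lemma ordX x n : x != 0 -> ord (x ^+ n) = (Z.of_nat n * ord x)%Z.
Proof.
move=> x0; elim: n => [|n IH]; first by rewrite expr0 ord1.
rewrite exprS (ord_mul Hk x0) ?expf_neq0 // IH; lia.
Qed.

Lemma ord_unifX n : ord (unif ^+ n) = Z.of_nat n.
Proof. by rewrite ordX ?(unif_neq0 Hk) // (ord_unif Hk); lia. Qed.

Lemma ord_add_lt x y : x != 0 -> y != 0 -> (ord x < ord y)%Z ->
  x + y != 0 /\ ord (x + y) = ord x.
Proof.
move=> x0 y0 lt.
have s0 : x + y != 0.
  by rewrite addr_eq0; apply/eqP => ex; move: lt; rewrite ex ordN; lia.
have h1 : (Z.min (ord x) (ord y) <= ord (x + y))%Z := ord_add Hk x0 y0 s0.
have h2 : (Z.min (ord (x + y)) (ord (- y)) <= ord (x + y - y))%Z.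
  by apply: (ord_add Hk); rewrite ?oppr_eq0 ?addrK.
by rewrite addrK ordN in h2; split=> //; lia.
Qed.

Lemma ord_add_neq x y : x != 0 -> y != 0 -> ord x <> ord y ->
  x + y != 0 /\ ord (x + y) = Z.min (ord x) (ord y).
Proof.
move=> x0 y0 ne; have [lt|lt] : (ord x < ord y \/ ord y < ord x)%Z by lia.
- by have [s0 ->] := ord_add_lt x0 y0 lt; split=> //; lia.
- by rewrite addrC; have [s0 ->] := ord_add_lt y0 x0 lt; split=> //; lia.
Qed.

Lemma vge0 n : vge 0 n. Proof. by left. Qed.

Lemma vge_nz x n : x != 0 -> vge x n <-> (n <= ord x)%Z.
Proof. by move=> x0; split=> [[/eqP|//]|]; [rewrite (negbTE x0) | right]. Qed.

Lemma vge_le x n m : (m <= n)%Z -> vge x n -> vge x m.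
Proof. by move=> le [h|h]; [left|right; lia]. Qed.

Lemma vgeD x y n : vge x n -> vge y n -> vge (x + y) n.
Proof.
have [->|x0] := eqVneq x 0; first by rewrite add0r.
have [->|y0] := eqVneq y 0; first by rewrite addr0.
have [->|s0] := eqVneq (x + y) 0; first by left.
rewrite !vge_nz // => hx hy; have := ord_add Hk x0 y0 s0; lia.
Qed.

Lemma vgeN x n : vge x n -> vge (- x) n.
Proof. by case=> [->|h]; [left; rewrite oppr0 | right; rewrite ordN]. Qed.

Lemma vgeB x y n : vge x n -> vge y n -> vge (x - y) n.
Proof. by move=> hx /vgeN; apply: vgeD. Qed.

Lemma vge_addr a b n : vge b n -> vge (a + b) n <-> vge a n.
Proof.
move=> hb; split=> [h|/vgeD]; last exact.
by rewrite -(addrK b a); apply: vgeB.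
Qed.

Lemma vgeM x y n m : vge x n -> vge y m -> vge (x * y) (n + m).
Proof.
have [->|x0] := eqVneq x 0; first by rewrite mul0r; left.
have [->|y0] := eqVneq y 0; first by rewrite mulr0; left.
rewrite !vge_nz ?mulf_neq0 // (ord_mul Hk x0 y0); lia.
Qed.

Lemma vge_unifX n : vge (unif ^+ n) (Z.of_nat n).
Proof. by right; rewrite ord_unifX; lia. Qed.

Lemma vge_unif : vge unif 1.
Proof. by right; rewrite (ord_unif Hk); lia. Qed.

Lemma vge_unifMK x n : vge (unif * x) (n + 1) -> vge x n.
Proof.
have [->|x0] := eqVneq x 0; first by left.
rewrite !vge_nz ?mulf_neq0 ?(unif_neq0 Hk) // (ord_mul Hk (unif_neq0 Hk) x0).
by rewrite (ord_unif Hk); lia.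
Qed.

Lemma in_idealE c x : c != 0 -> in_ideal ord c x <-> vge x (ord c).
Proof.
move=> c0; have vc y : y != 0 -> vge y (ord y) by right; lia.
split=> [[y [hy ->]]|hx].
  by rewrite -[ord c]Z.add_0_r; apply: vgeM (vc c c0) hy.
exists (c^-1 * x); split; last by rewrite mulrA mulfV // mul1r.
by have := vgeM (vc _ (invr_neq0 c0)) hx; rewrite ordV // Z.add_opp_diag_l.
Qed.

Lemma in_ideal_unif x : in_ideal ord unif x <-> vge x 1.
Proof. by rewrite in_idealE ?(unif_neq0 Hk) // (ord_unif Hk). Qed.

End Valuation.

Section DigitExpansion.
Variables (k : fieldType) (ord : k -> Z) (unif : k) (reps : seq k).
Hypothesis Hk : is_nonarch_local_field ord unif reps.
Local Open Scope ring_scope.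
Notation q := (size reps).
Notation r i := (nth 0 reps i).
Notation vge := (vge ord).

Lemma size_reps_gt0 : (0 < q)%nat.
Proof.
by have [i [hi _]] := reps_cover Hk (or_introl (erefl (0 : k))); apply: leq_ltn_trans hi.
Qed.

Lemma vge_reps i : (i < q)%nat -> vge (r i) 0.
Proof. exact: reps_in_o Hk i. Qed.

Lemma sum_unifX_recl (a : nat -> k) m :
  \sum_(0 <= i < m.+1) a i * unif ^+ i =
  a 0%nat + unif * \sum_(0 <= i < m) a i.+1 * unif ^+ i.
Proof.
rewrite big_nat_recl // expr0 mulr1 mulr_sumr; congr (_ + _).
by apply: eq_bigr => i _; rewrite exprS mulrCA.
Qed.

Lemma vge_sum_unifX (a : nat -> k) m N : (forall i, vge (a i) 0) ->
  vge (\sum_(m <= i < N) a i * unif ^+ i) (Z.of_nat m).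
Proof.
move=> ha; rewrite big_nat_cond; elim/big_ind: _ => //; first exact: vge0.
  by move=> x y; apply: (vgeD Hk).
move=> i /andP [/andP [hi _] _]; apply: (vge_le (n := (0 + Z.of_nat i)%Z)); first lia.
exact: (vgeM Hk) (ha i) (vge_unifX Hk i).
Qed.

Lemma digits_uniq m (u v : nat -> nat) :
  (forall i, u i < q)%nat -> (forall i, v i < q)%nat ->
  vge (\sum_(0 <= i < m) (r (u i) - r (v i)) * unif ^+ i) (Z.of_nat m) ->
  forall i, (i < m)%nat -> u i = v i.
Proof.
elim: m u v => [//|m IH] u v hu hv; rewrite sum_unifX_recl.
set S := \sum_(0 <= i < m) _ => hs.
have hUS : vge (unif * S) 1.
  rewrite -[1%Z]Z.add_0_r; apply: (vgeM Hk) (vge_unif Hk) _.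
  by apply: vge_sum_unifX => i; apply: (vgeB Hk); apply: vge_reps.
have u0 : u 0%nat = v 0%nat.
  apply: (reps_distinct Hk (hu 0%nat) (hv 0%nat)); apply/(in_ideal_unif Hk).
  by rewrite -(addrK (unif * S) (_ - _)); apply: (vgeB Hk) hUS; apply: vge_le hs; lia.
rewrite u0 subrr add0r in hs.
have /(IH _ _ (fun i => hu i.+1) (fun i => hv i.+1)) IHS : vge S (Z.of_nat m).
  by apply: (vge_unifMK Hk); apply: vge_le hs; lia.
by case=> [|i] //= /IHS.
Qed.

Lemma digits_exist m x : vge x 0 -> exists u : nat -> nat,
  (forall i, u i < q)%nat /\
  vge (x - \sum_(0 <= i < m) r (u i) * unif ^+ i) (Z.of_nat m).
Proof.
elim: m x => [|m IH] x hx.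
  by exists (fun _ => 0%nat); split=> [_|]; [exact: size_reps_gt0 | rewrite big_geq // subr0].
have [i0 [hi0 [x' [hx' ex]]]] := reps_cover Hk hx.
have [u' [hu' hs]] := IH x' hx'.
exists (fun i => if i is j.+1 then u' j else i0); split; first by case.
rewrite sum_unifX_recl /= opprD addrA ex -mulrBr.
by apply: vge_le (vgeM Hk (vge_unif Hk) hs); lia.
Qed.

Definition digit_nat N (f : {ffun 'I_N -> 'I_q}) (i : nat) : nat :=
  if (insub i : option 'I_N) is Some j then val (f j) else 0%nat.

Lemma digit_natE N (f : {ffun 'I_N -> 'I_q}) (j : 'I_N) : digit_nat f j = f j.
Proof. by rewrite /digit_nat valK. Qed.

Lemma digit_nat_lt N (f : {ffun 'I_N -> 'I_q}) i : (digit_nat f i < q)%nat.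
Proof. by rewrite /digit_nat; case: insub => [j|]; [exact: ltn_ord | exact: size_reps_gt0]. Qed.

Lemma digit_elem_split N m (f : {ffun 'I_N -> 'I_q}) : (m <= N)%nat ->
  digit_elem unif f = \sum_(0 <= i < m) r (digit_nat f i) * unif ^+ i
                    + \sum_(m <= i < N) r (digit_nat f i) * unif ^+ i.
Proof.
move=> mN; rewrite -(big_cat_nat (leq0n m) mN) /digit_elem big_mkord.
by apply: eq_bigr => j _; rewrite digit_natE.
Qed.

(* [u0] are the first [m] digits of [0], hence of every element of [unif^m o]. *)
Lemma digit_class_sub_ball N m (u0 : nat -> nat) : (m <= N)%nat ->
  (forall i, u0 i < q)%nat ->
  vge (\sum_(0 <= i < m) r (u0 i) * unif ^+ i) (Z.of_nat m) ->
  forall f : {ffun 'I_N -> 'I_q},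
  (forall y, in_o ord y -> vge (digit_elem unif f + unif ^+ N * y) (Z.of_nat m)) <->
  (forall j : 'I_N, (j < m)%nat -> val (f j) = u0 j).
Proof.
move=> mN hu0 hz f.
have hY y : in_o ord y -> vge (unif ^+ N * y) (Z.of_nat m).
  by move=> hy; apply: vge_le (vgeM Hk (vge_unifX Hk N) hy); lia.
have hB : vge (\sum_(m <= i < N) r (digit_nat f i) * unif ^+ i) (Z.of_nat m).
  by apply: vge_sum_unifX => i; apply/vge_reps/digit_nat_lt.
split=> [hall j hj | hj y hy].
- have := hall 0 (or_introl (erefl _)).
  rewrite (vge_addr Hk _ (hY 0 (or_introl (erefl _)))) (digit_elem_split f mN).
  rewrite (vge_addr Hk _ hB) => /(vgeB Hk)/(_ hz); rewrite -sumrB.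
  under eq_bigr do rewrite -mulrBl.
  by move/(digits_uniq (@digit_nat_lt _ f) hu0)/(_ j hj); rewrite digit_natE.
- rewrite (vge_addr Hk _ (hY y hy)) (digit_elem_split f mN) (vge_addr Hk _ hB).
  rewrite (eq_big_nat _ _ (F2 := fun i => r (u0 i) * unif ^+ i)) //.
  move=> i /andP [_ him]; have hiN : (i < N)%nat by apply: leq_trans him mN.
  by have := digit_natE f (Ordinal hiN); rewrite (hj (Ordinal hiN) him) => /= ->.
Qed.

End DigitExpansion.

Lemma decideP (P : Prop) : decide P = true <-> P.
Proof. by rewrite /decide; case: excluded_middle_informative. Qed.

Section HaarMeasureOfBalls.
Variables (k : fieldType) (ord : k -> Z) (unif : k) (reps : seq k).
Hypothesis Hk : is_nonarch_local_field ord unif reps.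
Local Open Scope ring_scope.
Notation vge := (vge ord).

Lemma inner_count_ball m N : (m <= N)%nat ->
  inner_count ord unif reps (fun x => vge x (Z.of_nat m)) N = expn (size reps) (N - m).
Proof.
move=> mN.
have [u0 [hu0 hz]] := digits_exist Hk m (vge0 _ 0%Z).
rewrite sub0r in hz; move/(vgeN Hk): hz; rewrite opprK => hz.
rewrite -(card_family_prefix (fun i : 'I_N => Ordinal (hu0 i)) mN) /inner_count.
apply: eq_card => f; rewrite inE; apply/idP/familyP.
- move/decideP/(digit_class_sub_ball Hk mN hu0 hz) => hf j.
  by case: ifP => hj //=; apply/eqP/val_inj/hf.
- move=> hf; apply/decideP/(digit_class_sub_ball Hk mN hu0 hz) => j hj.
  by have := hf j; rewrite hj => /eqP ->.
Qed.

Lemma resq_gt0 : (0 < resq reps)%R.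
Proof. exact/lt_0_INR/ltP/(size_reps_gt0 Hk). Qed.

Lemma haar_ball m :
  haar_open ord unif reps (fun x => vge x (Z.of_nat m)) = ((/ resq reps) ^ m)%R.
Proof.
have hq := resq_gt0.
rewrite /haar_open (Lim_seq_ext_loc _ (fun _ => ((/ resq reps) ^ m)%R)) ?Lim_seq_const //.
exists m => N /leP mN; rewrite inner_count_ball //.
have -> : INR (expn (size reps) (N - m)) = (resq reps ^ (N - m))%R.
  by elim: (N - m)%nat => [//|n IH]; rewrite expnS -multE mult_INR IH.
rewrite -{2}(subnK mN) pow_add pow_inv; field; split; apply: pow_nonzero; lra.
Qed.

Lemma haar_empty : haar_open ord unif reps (fun _ => False) = 0%R.
Proof.
rewrite /haar_open (Lim_seq_ext _ (fun _ => 0%R)) ?Lim_seq_const // => N.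
rewrite /inner_count (_ : #|_| = 0%nat) /= ?Rdiv_0_l //.
apply/eqP; rewrite cards_eq0; apply/eqP/setP => f; rewrite !inE.
by apply/negbTE/negP => /decideP /(_ 0 (or_introl (erefl _))).
Qed.

End HaarMeasureOfBalls.

Lemma haar_open_ext (k : fieldType) (ord : k -> Z) unif reps (S S' : k -> Prop) :
  (forall x, S x <-> S' x) -> haar_open ord unif reps S = haar_open ord unif reps S'.
Proof.
move=> h; have -> // : S = S'.
by apply: functional_extensionality => x; apply: propositional_extensionality.
Qed.

Section HalfPowerSums.
Local Open Scope C_scope.

Lemma Cpow_doubleM (z a : C) j : z ^ (j.*2) * a ^ j = (z * z * a) ^ j.
Proof.
by rewrite -muln2 mulnC Cpow_mult_r Cpow_mult_l; congr (_ ^ _ * _); rewrite /= Cmult_1_r.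
Qed.

Lemma half_eq_double x m : (x = m.*2 \/ x = (m.*2).+1)%nat -> half x = m.
Proof. by case=> ->; rewrite ?half_double // -uphalfE uphalf_double. Qed.

Variables (z a : C).
Let r := z * z * a.
Hypothesis r_neq1 : 1 - r <> 0.

(* The terms [l = 2 j] and [l = 2 j + 1] share the power of [a], so each parity
   class of terms is a geometric progression of ratio [r]. *)
Lemma sum_n_halfpow_even h n :
  sum_n (fun l => z ^ l * a ^ half (h.*2 + l)) (n.*2) =
  a ^ h * (1 - r ^ n.+1) / (1 - r) + z * a ^ h * (1 - r ^ n) / (1 - r).
Proof.
elim: n => [|n IH]; first by rewrite sum_O addn0 half_double /=; field.
rewrite doubleS !sum_Sn IH.
have odd_term : z ^ (n.*2).+1 * a ^ half (h.*2 + (n.*2).+1) = z * a ^ h * r ^ n.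
  rewrite (half_eq_double (m := (h + n)%nat)); last by right; rewrite doubleD addnS.
  by rewrite Cpow_add_r /= -Cpow_doubleM /r; ring.
have even_term : z ^ (n.*2).+2 * a ^ half (h.*2 + (n.*2).+2) = a ^ h * r ^ n.+1.
  rewrite (half_eq_double (m := (h + n.+1)%nat)); last by left; rewrite doubleD doubleS.
  by rewrite -(doubleS n) Cpow_add_r -Cpow_doubleM /r; ring.
by rewrite /plus /= odd_term even_term /=; field.
Qed.

Lemma sum_n_halfpow_odd h n :
  sum_n (fun l => z ^ l * a ^ half ((h.*2).+1 + l)) ((n.*2).+1) =
  a ^ h * (1 - r ^ n.+1) / (1 - r) + z * a ^ h.+1 * (1 - r ^ n.+1) / (1 - r).
Proof.
elim: n => [|n IH].
  rewrite sum_Sn sum_O (half_eq_double (m := h)); last by right; rewrite addn0.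
  rewrite (half_eq_double (m := h.+1)); last by left; rewrite doubleS addn1.
  by rewrite /plus /= /r; field.
rewrite doubleS 2!sum_Sn IH.
have even_term : z ^ (n.*2).+2 * a ^ half ((h.*2).+1 + (n.*2).+2) = a ^ h * r ^ n.+1.
  rewrite (half_eq_double (m := (h + n.+1)%nat)); last by right; rewrite doubleD doubleS; lia.
  by rewrite -(doubleS n) Cpow_add_r -Cpow_doubleM /r; ring.
have odd_term : z ^ (n.*2).+3 * a ^ half ((h.*2).+1 + (n.*2).+3) = z * a ^ h.+1 * r ^ n.+1.
  rewrite (half_eq_double (m := (h.+1 + n.+1)%nat)); last by left; rewrite doubleD !doubleS; lia.
  by rewrite -(doubleS n) Cpow_S Cpow_add_r -Cpow_doubleM /r; ring.
by rewrite /plus /= even_term odd_term /=; field.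
Qed.

Lemma sum_n_halfpow e T : (e <= T.*2)%nat ->
  sum_n (fun l => z ^ l * a ^ half (e + l)) (T.*2 - e) =
  a ^ half e * (1 - r ^ (T + 1 - uphalf e)) / (1 - r)
  + z * a ^ uphalf e * (1 - r ^ (T - half e)) / (1 - r).
Proof.
have [h [p [hp ->]]] : exists h p, (p <= 1)%nat /\ e = (p + h.*2)%nat.
  by exists (half e), (odd e); split; [case: odd | rewrite odd_double_half].
move=> heT; have [n EnT] : exists n, T = (h + n)%nat.
  by exists (T - h)%nat; case: p hp heT => [|[|//]] _; rewrite -!addnn; lia.
rewrite {}EnT in heT *; case: p hp heT => [|[|//]] _ heT.
- rewrite add0n half_double uphalf_double.
  have -> : ((h + n).*2 - h.*2)%nat = n.*2 by rewrite -!addnn; lia.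
  have -> : (h + n + 1 - h)%nat = n.+1 by lia.
  have -> : (h + n - h)%nat = n by lia.
  exact: sum_n_halfpow_even.
- case: n heT => [|n] heT; first by rewrite -!addnn in heT; lia.
  rewrite add1n (half_eq_double (m := h)); last by right.
  rewrite uphalfE (half_eq_double (m := h.+1)); last by left; rewrite doubleS.
  have -> : ((h + n.+1).*2 - (h.*2).+1)%nat = (n.*2).+1 by rewrite -!addnn; lia.
  have -> : (h + n.+1 + 1 - h.+1)%nat = n.+1 by lia.
  have -> : (h + n.+1 - h)%nat = n.+1 by lia.
  exact: sum_n_halfpow_odd.
Qed.

End HalfPowerSums.

Lemma is_series_finite {K : AbsRing} {V : NormedModule K} (a : nat -> V) L :
  (forall l, (L < l)%nat -> a l = zero) -> is_series a (sum_n a L).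
Proof.
move=> a0; apply: (filterlim_ext_loc (fun _ => sum_n a L)); last exact: filterlim_const.
exists L => n /leP hn; rewrite -(subnK hn).
elim: (n - L)%nat => [//|d IH]; rewrite addSn sum_Sn -IH a0 ?plus_zero_r //.
by rewrite ltnS leq_addl.
Qed.

Section HalfPowerSeries.
Local Open Scope C_scope.
Variables (qR : R) (z : C) (e T : nat).
Hypotheses (qR_gt0 : (0 < qR)%R) (zw_neq1 : 1 - z * (z * / RtoC qR) <> 0).

Definition halfpow_coef (l : nat) : R :=
  if (e + l <= T.*2)%nat then ((/ qR) ^ half (e + l))%R else 0%R.

Lemma is_series_halfpow : (e <= T.*2)%nat ->
  is_series (fun l => z ^ l * RtoC (halfpow_coef l))
   (RtoC ((/ qR) ^ half e) * (1 - (z * (z * / RtoC qR)) ^ (T + 1 - uphalf e))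
      / (1 - z * (z * / RtoC qR))
    + z * RtoC ((/ qR) ^ uphalf e) * (1 - (z * (z * / RtoC qR)) ^ (T - half e))
      / (1 - z * (z * / RtoC qR))).
Proof.
move=> heT.
have zw : z * (z * / RtoC qR) = z * z * RtoC (/ qR) by rewrite RtoC_inv; [ring | lra].
rewrite zw !RtoC_pow -(sum_n_halfpow _ heT); last by rewrite -zw.
rewrite -(sum_n_ext_loc (fun l => z ^ l * RtoC (halfpow_coef l))); last first.
  by move=> l /leP hl; rewrite /halfpow_coef ifT ?RtoC_pow //; lia.
by apply: is_series_finite => l hl; rewrite /halfpow_coef ifF ?Cmult_0_r //; lia.
Qed.

Lemma is_series_halfpow_out : ~ (e <= T.*2)%nat ->
  is_series (fun l => z ^ l * RtoC (halfpow_coef l)) (RtoC 0).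
Proof.
move=> heT; have coef0 l : halfpow_coef l = 0%R by rewrite /halfpow_coef ifF //; lia.
rewrite (_ : RtoC 0 = sum_n (fun l => z ^ l * RtoC (halfpow_coef l)) 0).
  by apply: is_series_finite => l _; rewrite coef0 Cmult_0_r.
by rewrite sum_O coef0 Cmult_0_r.
Qed.

End HalfPowerSeries.

Section SquareFormLevelSets.
Variables (k : fieldType) (ord : k -> Z) (unif : k) (reps : seq k).
Hypothesis Hk : is_nonarch_local_field ord unif reps.
Local Open Scope ring_scope.
Variables (Delta t : k) (T : nat).
Hypotheses (ord_Delta : ord Delta = 1%Z) (Delta_neq0 : Delta != 0) (t_neq0 : t != 0)
  (ord_t : ord t = Z.of_nat T) (two_neq0 : (2%:R : k) != 0)
  (ord_two : ord 2%:R = Z.of_nat (ram_index ord)).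

Lemma ord_sq_form_sub x : x != 0 ->
  sq_form Delta x - t ^+ 2 != 0 /\
  ord (sq_form Delta x - t ^+ 2) = Z.min (1 + 2 * ord x) (2 * Z.of_nat T).
Proof.
move=> x0; have t2 : - t ^+ 2 != 0 by rewrite oppr_eq0 expf_neq0.
have Dx2 : Delta * x ^+ 2 != 0 by rewrite mulf_neq0 // expf_neq0.
have oDx2 : ord (Delta * x ^+ 2) = (1 + 2 * ord x)%Z.
  by rewrite (ord_mul Hk Delta_neq0 (expf_neq0 _ x0)) ord_Delta (ordX Hk _ x0).
have ot2 : ord (- t ^+ 2) = (2 * Z.of_nat T)%Z by rewrite (ordN Hk) (ordX Hk _ t_neq0) ord_t.
have [s0 os] := ord_add_neq Hk Dx2 t2 ltac:(rewrite oDx2 ot2; lia).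
by rewrite /sq_form; split=> //; rewrite os oDx2 ot2.
Qed.

Lemma sq_form_sub_in_ideal x l : vge ord x 0 ->
  in_ideal ord (2%:R * unif ^+ l) (sq_form Delta x - t ^+ 2) <->
  (ram_index ord + l <= T.*2)%nat /\ vge ord x (Z.of_nat (half (ram_index ord + l))).
Proof.
move=> hx; have u0 := unif_neq0 Hk.
rewrite (in_idealE Hk _ (mulf_neq0 two_neq0 (expf_neq0 _ u0))).
rewrite (ord_mul Hk two_neq0 (expf_neq0 _ u0)) (ord_unifX Hk) ord_two.
have := odd_double_half (ram_index ord + l); rewrite -addnn.
have : (odd (ram_index ord + l) <= 1)%nat by case: odd.
have [->|x0] := eqVneq x 0.
  have t2 : - t ^+ 2 != 0 by rewrite oppr_eq0 expf_neq0.
  rewrite /sq_form expr0n /= mulr0 sub0r (vge_nz _ _ t2) (ordN Hk) (ordX Hk _ t_neq0) ord_t.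
  by split=> [h|[h _]]; [split; [lia | exact: vge0] | lia].
have [s0 os] := ord_sq_form_sub x0.
by rewrite (vge_nz _ _ s0) (vge_nz _ _ x0) os; lia.
Qed.

Lemma X_ell_sq_form l : X_ell ord unif reps (sq_form Delta) (t ^+ 2) l =
  halfpow_coef (resq reps) (ram_index ord) T l.
Proof.
rewrite /X_ell /halfpow_coef; case: ifP => hl.
- rewrite -(haar_ball Hk); apply: haar_open_ext => x; split.
    by case=> hx /(sq_form_sub_in_ideal _ hx) [].
  move=> hm; have hx : vge ord x 0 by apply: vge_le hm; lia.
  by split=> //; apply/(sq_form_sub_in_ideal _ hx).
- rewrite -(haar_empty ord unif reps); apply: haar_open_ext => x; split=> //.
  by case=> hx /(sq_form_sub_in_ideal _ hx) []; rewrite hl.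
Qed.

End SquareFormLevelSets.

Lemma powerRZ_le_iff (x : R) a b : (1 < x)%R ->
  (powerRZ x a <= powerRZ x b)%R <-> (a <= b)%Z.
Proof.
move=> hx; have lt c d : (c < d)%Z -> (powerRZ x c < powerRZ x d)%R.
  by move=> hcd; rewrite !powerRZ_Rpower; try lra; apply/Rpower_lt/IZR_lt.
split=> h.
- have [//|/lt] : (a <= b \/ b < a)%Z by lia.
  lra.
- have [/lt|->] : (a < b \/ a = b)%Z by lia.
  all: lra.
Qed.

Section AbsoluteValue.
Variables (k : fieldType) (ord : k -> Z) (unif : k) (reps : seq k).
Hypothesis Hk : is_nonarch_local_field ord unif reps.
Local Open Scope ring_scope.

(* [0] and [1] lie in different residue classes. *)
Lemma size_reps_ge2 : (2 <= size reps)%nat.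
Proof.
have o1 : in_o ord (1 : k) by right; rewrite (ord1 Hk).
have [i0 [hi0 /(in_ideal_unif Hk) h0]] := reps_cover Hk (or_introl (erefl (0 : k))).
have [i1 [hi1 /(in_ideal_unif Hk) h1]] := reps_cover Hk o1.
suff : i0 <> i1 by move: hi0 hi1; rewrite /ltn /=; lia.
move=> same; have := vgeB Hk h1 h0; rewrite -same sub0r opprK subrK.
by case=> [/eqP|]; [rewrite oner_eq0 | rewrite (ord1 Hk)].
Qed.

Lemma resq_gt1 : (1 < resq reps)%R.
Proof. by apply: (Rlt_le_trans _ (INR 2)); [rewrite /=; lra | apply/le_INR/leP/size_reps_ge2]. Qed.

Lemma absv_nz x : x != 0 -> absv ord reps x = powerRZ (resq reps) (- ord x).
Proof. by move=> x0; rewrite /absv (negbTE x0). Qed.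

Lemma absv_le_ord x y : x != 0 -> y != 0 ->
  (absv ord reps x <= absv ord reps y)%R <-> (ord y <= ord x)%Z.
Proof. by move=> x0 y0; rewrite !absv_nz // (powerRZ_le_iff _ _ resq_gt1); lia. Qed.

Lemma absv_inj_ord x y : x != 0 -> y != 0 ->
  absv ord reps x = absv ord reps y -> ord x = ord y.
Proof.
move=> x0 y0 e; have := absv_le_ord x0 y0; have := absv_le_ord y0 x0; rewrite e.
by move=> [+ _] [+ _] => /(_ (Rle_refl _)) + /(_ (Rle_refl _)); lia.
Qed.

Lemma absv_neq0 x y : absv ord reps x = absv ord reps y -> y != 0 -> x != 0.
Proof.
move=> e y0; apply/eqP => x0; move: e; rewrite x0 /absv eqxx (negbTE y0).
by have := powerRZ_lt _ (- ord y) (Rlt_trans _ _ _ Rlt_0_1 resq_gt1); lra.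
Qed.

Lemma absv_unifX n : absv ord reps (unif ^+ n) = (/ resq reps ^ n)%R.
Proof.
by rewrite absv_nz ?expf_neq0 ?(unif_neq0 Hk) // (ord_unifX Hk) pow_powerRZ -powerRZ_neg'.
Qed.

Lemma absv_unif : absv ord reps unif = (/ resq reps)%R.
Proof. by have := absv_unifX 1; rewrite expr1 /= Rmult_1_r. Qed.

Lemma ord_absv_unifX x n : x != 0 -> absv ord reps x = (/ resq reps ^ n)%R ->
  ord x = Z.of_nat n.
Proof.
move=> x0; rewrite -(absv_unifX n) => /(absv_inj_ord x0).
by rewrite (ord_unifX Hk); apply; rewrite expf_neq0 ?(unif_neq0 Hk).
Qed.

Lemma ord_two_ram_index : residue_char_two ord unif -> ord 2%:R = Z.of_nat (ram_index ord).
Proof.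
case=> two0 /(in_ideal_unif Hk) [/eqP|]; first by rewrite (negbTE two0).
by move=> h; rewrite /ram_index Z2Nat.id //; lia.
Qed.

Lemma absv_sq_le_two t (T : nat) : t != 0 -> (2%:R : k) != 0 ->
  ord t = Z.of_nat T -> ord 2%:R = Z.of_nat (ram_index ord) ->
  (absv ord reps (t ^+ 2) <= absv ord reps 2%:R)%R <-> (ram_index ord <= T.*2)%nat.
Proof.
move=> t0 two0 ordt ord2.
by rewrite (absv_le_ord (expf_neq0 _ t0) two0) (ordX Hk _ t0) ordt ord2 -addnn; lia.
Qed.

End AbsoluteValue.

Lemma Cmod_qpowC (qR : R) (beta : C) : Cmod (qpowC qR beta) = Rpower qR (- fst beta).
Proof.
rewrite /Cmod /qpowC /=; set A := Rpower _ _; set th := (snd beta * ln qR)%R.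
have A0 : (0 <= A)%R by apply/Rlt_le/exp_pos.
have := sin2_cos2 th; rewrite /Rsqr => sc.
rewrite (_ : ((A * cos th) ^ 2 + (- (A * sin th)) ^ 2 = A ^ 2)%R) ?sqrt_pow2 //.
by rewrite -[(A ^ 2)%R]Rmult_1_r -sc; ring.
Qed.

(* [|z w| = q^(-2 Re beta - 1) < 1]. *)
Lemma qpowC_zw_neq1 (qR : R) (beta : C) : (1 < qR)%R -> (0 < fst beta)%R ->
  (1 - qpowC qR beta * (qpowC qR beta * / RtoC qR))%C <> 0%C.
Proof.
move=> hq hb; set z := qpowC qR beta.
have z_lt1 : (Cmod z < 1)%R.
  by rewrite Cmod_qpowC -(Rpower_O qR); [apply: Rpower_lt; lra | lra].
have q0 : RtoC qR <> 0%C by move=> /RtoC_inj; lra.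
move=> h0; have /(f_equal Cmod) : (z * (z * / RtoC qR))%C = 1%C.
  by transitivity (1 - (1 - z * (z * / RtoC qR)))%C; [ring | rewrite h0; ring].
rewrite Cmod_1 !Cmod_mult Cmod_inv // Cmod_R Rabs_pos_eq; last lra.
have := Cmod_ge_0 z; have : (/ qR < 1)%R by rewrite -Rinv_1; apply: Rinv_lt_contravar; lra.
have : (0 < / qR)%R by apply: Rinv_0_lt_compat; lra.
nra.
Qed.

Unset Implicit Arguments.

Theorem proposition5p3 (k : fieldType) (ord : k -> Z) (unif : k) (reps : seq k)
    (Delta t : k) (T : nat) (beta : C) :
  is_nonarch_local_field ord unif reps ->
  residue_char_two ord unif ->
  absv ord reps Delta = absv ord reps unif ->
  t <> (GRing.zero : k) ->
  in_o ord t ->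
  absv ord reps t = (/ resq reps ^ T)%R ->
  (0 < fst beta)%R ->
  let q := resq reps in
  let e := ram_index ord in
  let z := qpowC q beta in
  let w := (z * / RtoC q)%C in
  let X := fun l : nat =>
    X_ell ord unif reps (sq_form Delta) (GRing.exp t 2) l in
  ((absv ord reps (GRing.exp t 2) <= absv ord reps (GRing.natmul (GRing.one k) 2))%R ->
     is_series (fun l : nat => (z ^ l * RtoC (X l))%C)
       (RtoC (absv ord reps unif ^ half e)
          * (1 - (z * w) ^ (T + 1 - uphalf e)) / (1 - z * w)
        + z * RtoC (absv ord reps unif ^ uphalf e)
          * (1 - (z * w) ^ (T - half e)) / (1 - z * w))%C)
  /\
  (~ (absv ord reps (GRing.exp t 2) <= absv ord reps (GRing.natmul (GRing.one k) 2))%R ->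
     is_series (fun l : nat => (z ^ l * RtoC (X l))%C) (RtoC 0)).
Proof.
move=> Hk two_e absD /eqP t0 _ abst hb q e z w X.
have [two0 _] := two_e.
have u0 := unif_neq0 Hk.
have D0 := absv_neq0 Hk absD u0.
have ordD : ord Delta = 1%Z by rewrite (absv_inj_ord Hk D0 u0 absD) (ord_unif Hk).
have ordt := ord_absv_unifX Hk t0 abst.
have ord2 := ord_two_ram_index Hk two_e.
have Xc l : (z ^ l * RtoC (X l))%C = (z ^ l * RtoC (halfpow_coef q e T l))%C.
  by rewrite /X (X_ell_sq_form Hk ordD D0 t0 ordt two0 ord2).
have zw := qpowC_zw_neq1 (resq_gt1 Hk) hb.
split=> /(absv_sq_le_two Hk t0 two0 ordt ord2) heT.
all: apply: (is_series_ext _ _ _ (fun l => esym (Xc l))).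
- rewrite (absv_unif Hk); apply: is_series_halfpow => //.
  exact: Rlt_trans Rlt_0_1 (resq_gt1 Hk).
- exact: is_series_halfpow_out.
Qed.
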